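(* Let $d\ge1$, $n\ge2$ be integers, $\kappa_d$ the volume of the $d$-dimensional unit ball, $V\ge0$, $c\in(0,\infty)$, $-d/2<\tau_1<\dots<\tau_n$ reals, $a_i=\tau_i+d$, $x_i=\tau_i+d/2$. Let $\Sigma_n^{\mathrm{sb}}$ have entries $\frac{Vd\kappa_d}{2(x_i+x_j)}$, $\Sigma_n^{\mathrm{sp}}$ entries $\frac{Vd^2\kappa_d^2}{a_ia_j}$, and $\Sigma_n=\Sigma_n^{\mathrm{sb}}+c\Sigma_n^{\mathrm{sp}}$ if $c\le1$, $\Sigma_n=\frac1c\Sigma_n^{\mathrm{sb}}+\Sigma_n^{\mathrm{sp}}$ if $c>1$. Define $$D=\Bigg(1+\sum_{j=1}^n\frac{cd\kappa_d}{a_j}\Bigg(\frac{4x_j\prod_{k\in[n]\setminus\{j\}}(x_k+x_j)^2}{a_j\prod_{k\in[n]\setminus\{j\}}(x_k-x_j)^2}-\sum_{i\in[n]\setminus\{j\}}\frac{8x_ix_j(x_i+x_j)\prod_{l\in[n]\setminus\{i,j\},\,k\in\{i,j\}}(x_k+x_l)}{a_i(x_j-x_i)^2\prod_{l\in[n]\setminus\{i,j\},\,k\in\{i,j\}}(x_k-x_l)}\Bigg)\Bigg)\frac{\prod_{1\le i<j\le n}(x_i-x_j)^2}{\prod_{1\le i,j\le n}(x_i+x_j)}.$$ Then $\det(\Sigma_n)=D\big(\frac{Vd\kappa_d}{2}\big)^n$ for $c\in(0,1]$ and $\det(\Sigma_n)=D\big(\frac{Vd\kappa_d}{2c}\big)^n$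 for $c\in(1,\infty)$.
   Context: $\Sigma_n$ is the asymptotic covariance matrix of normalized length power functionals in the critical regime $t\delta_t^d\to c$. $[n]=\{1,\dots,n\}$; products over ''$l\in A,\,k\in\{i,j\}$'' run over all such pairs $(l,k)$. *)

From mathcomp Require Import all_boot all_order all_algebra.
From mathcomp Require Import reals trigo.
Set Implicit Arguments. Unset Strict Implicit. Unset Printing Implicit Defensive.
Import Order.TTheory GRing.Theory Num.Theory.
Local Open Scope ring_scope.

(* kappa_d : volume of the d-dimensional unit ball, via the standard
   recursion kappa_0 = 1, kappa_1 = 2, kappa_{d+2} = 2 pi/(d+2) kappa_d
   (equivalently pi^(d/2) / Gamma(d/2+1)). *)
Fixpoint ball_vol {R : realType} (d : nat) : R :=
  match d with
  | 0 => 1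
  | 1 => 2
  | k.+2 => (2 * pi / (k.+2)%:R) * ball_vol k
  end.

Section Defs.
Variables (R : realType) (d n : nat) (V c : R) (tau : 'I_n -> R).

Definition a_ (i : 'I_n) : R := tau i + d%:R.
Definition x_ (i : 'I_n) : R := tau i + d%:R / 2.

Definition Sigma_sb : 'M[R]_n :=
  \matrix_(i, j) (V * d%:R * ball_vol d / (2 * (x_ i + x_ j))).
Definition Sigma_sp : 'M[R]_n :=
  \matrix_(i, j) (V * d%:R ^+ 2 * ball_vol d ^+ 2 / (a_ i * a_ j)).

Definition Sigma : 'M[R]_n :=
  if c <= 1 then Sigma_sb + c *: Sigma_sp
  else c^-1 *: Sigma_sb + Sigma_sp.

Definition Dconst : R :=
  (1 + \sum_(j < n)
     (c * d%:R * ball_vol d / a_ j) *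
     ( (4 * x_ j * (\prod_(k < n | k != j) (x_ k + x_ j) ^+ 2))
         / (a_ j * (\prod_(k < n | k != j) (x_ k - x_ j) ^+ 2))
       - \sum_(i < n | i != j)
           (8 * x_ i * x_ j * (x_ i + x_ j)
              * (\prod_(l < n | (l != i) && (l != j)) ((x_ i + x_ l) * (x_ j + x_ l))))
           / (a_ i * (x_ j - x_ i) ^+ 2
              * (\prod_(l < n | (l != i) && (l != j)) ((x_ i - x_ l) * (x_ j - x_ l))))))
  * ((\prod_(i < n) \prod_(j < n | (i < j)%N) (x_ i - x_ j) ^+ 2)
     / (\prod_(i < n) \prod_(j < n) (x_ i + x_ j))).
End Defs.

From mathcomp Require Import all_boot all_order all_algebra.
From mathcomp Require Import reals trigo.
From mathcomp Require Import zify ring lra.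
Set Implicit Arguments. Unset Strict Implicit. Unset Printing Implicit Defensive.
Import Order.TTheory GRing.Theory Num.Theory.
Local Open Scope ring_scope.

(* Up to the scalar V d kappa_d / 2 (resp. V d kappa_d / (2 c)), Sigma_n is
   C + p q^T, where C = (1 / (x_i + x_j)) is a Cauchy matrix, q_j = 1 / a_j and
   p_i = 2 c d kappa_d / a_i.  By the matrix determinant lemma,
   det (C + p q^T) = det C + q^T adj(C) p.  Cauchy's determinant formula gives
   det C = prod_(i<j) (x_i - x_j)^2 / prod_(i,j) (x_i + x_j); applied to the
   minors of C it gives closed forms for the cofactors, and the diagonal and
   off-diagonal cofactors produce the two kinds of terms in D. *)

Lemma det_scale_rows_cols (R : comPzRingType) n (u v : 'I_n -> R) (B : 'M[R]_n) :
  \det (\matrix_(i, j) (u i * B i j * v j)) =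
  (\prod_i u i) * (\prod_j v j) * \det B.
Proof.
have -> : \matrix_(i, j) (u i * B i j * v j) =
    diag_mx (\row_i u i) *m B *m diag_mx (\row_j v j).
  by apply/matrixP => i j; rewrite mul_diag_mx mul_mx_diag !mxE.
rewrite !det_mulmx !det_diag.
under eq_bigr do rewrite mxE.
under [X in _ * _ * X]eq_bigr do rewrite mxE.
by rewrite mulrAC.
Qed.

Lemma det_ulsub_schur (R : comUnitRingType) n (A : 'M[R]_(1 + n)) :
  let a := ulsubmx A 0 0 in a \is a GRing.unit ->
  \det A = a * \det (drsubmx A - a^-1 *: (dlsubmx A *m ursubmx A)).
Proof.
move=> a a_unit; rewrite -{1}(submxK A).
have -> : block_mx (ulsubmx A) (ursubmx A) (dlsubmx A) (drsubmx A) =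
    block_mx 1 0 (a^-1 *: dlsubmx A) 1 *m
    block_mx a%:M (ursubmx A) 0 (drsubmx A - a^-1 *: (dlsubmx A *m ursubmx A)).
  rewrite mulmx_block !mul1mx !mul0mx !addr0 -!scalemxAl addrCA subrr addr0.
  by rewrite mul_mx_scalar scalerA mulVr // scale1r -mx11_scalar.
by rewrite det_mulmx det_lblock det_ublock !det1 !mul1r det_scalar1.
Qed.

Lemma det_add_rank1 (R : idomainType) n (A : 'M[R]_n) (p : 'cV_n) (q : 'rV_n) :
  \det A != 0 -> \det (A + p *m q) = \det A + (q *m \adj A *m p) 0 0.
Proof.
move=> detA_neq0.
have eliminate : block_mx 1 (-q) p A =
    block_mx 1 0 p 1 *m block_mx 1 (-q) 0 (A + p *m q) :> 'M_(1 + n).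
  by rewrite mulmx_block !mul1mx !mul0mx !addr0 mulmx1 mulmxN addrCA addNr addr0.
have reduce : block_mx 1 (-q) p A *m block_mx (\det A)%:M 0 (- (\adj A *m p)) 1 =
    block_mx ((\det A)%:M + q *m \adj A *m p) (-q) 0 A :> 'M_(1 + n).
  rewrite mulmx_block !mulmx1 !mulmx0 !mul1mx add0r mulNmx !mulmxN opprK !mulmxA.
  by rewrite mul_mx_adj mul_mx_scalar mul_scalar_mx subrr add0r.
have := congr1 determinant reduce.
rewrite det_mulmx eliminate det_mulmx !det_lblock !det_ublock !det1 !mul1r.
rewrite det_scalar1 det_mx11 !mxE eqxx mulr1n mulr1 => detE.
by apply: (mulIf detA_neq0); rewrite detE.
Qed.

Lemma signr_addn_subn (R : pzRingType) m i j : (i <= m)%N -> (j <= m)%N ->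
  (-1) ^+ (i + j) = (-1) ^+ (m - i) * (-1) ^+ (m - j) :> R.
Proof.
move=> le_im le_jm; rewrite -exprD -[LHS]signr_odd -[RHS]signr_odd !oddD !oddB //.
by rewrite addbACA addbb.
Qed.

Lemma prod_ord_gt_const (R : comPzSemiRingType) n (j : 'I_n) (c : R) :
  \prod_(b < n | (j < b)%N) c = c ^+ (n - j.+1).
Proof.
rewrite -(big_mkord (fun b => (j < b)%N) (fun _ => c)).
rewrite (big_cat_nat (leq0n j.+1)) //= big_nat_cond big_pred0 ?mul1r; last first.
  by move=> b; apply/negP => /andP[/andP[_ lt_bj] lt_jb]; lia.
rewrite -prodr_const_nat big_nat_cond [RHS]big_nat_cond.
by apply: eq_bigl => b; lia.
Qed.

Section CauchyDeterminant.
Variable R : fieldType.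

Definition cauchy_mx n (x y : 'I_n -> R) : 'M[R]_n := \matrix_(i, j) (x i + y j)^-1.

Definition vandermonde n (x : 'I_n -> R) : R :=
  \prod_(i < n) \prod_(j < n | (i < j)%N) (x j - x i).

Definition cauchy_denom n (x y : 'I_n -> R) : R := \prod_(i < n) \prod_(j < n) (x i + y j).

Lemma vandermonde_lift m (x : 'I_m.+1 -> R) (j : 'I_m.+1) :
  vandermonde x = vandermonde (x \o lift j) *
    (\prod_(a < m.+1 | (a < j)%N) (x j - x a)) * \prod_(b < m.+1 | (j < b)%N) (x b - x j).
Proof.
rewrite /vandermonde (bigD1_ord j) //= mulrC; congr (_ * _).
under eq_bigr => a _ do rewrite big_mkcond (bigD1_ord j) //=.
rewrite big_split /= mulrC; congr (_ * _).
  apply: eq_bigr => a _; rewrite [RHS]big_mkcond; apply: eq_bigr => b _.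
  by rewrite /= !ltnNge leq_bump2.
by rewrite [RHS]big_mkcond (bigD1_ord j) //= ltnn mul1r.
Qed.

Lemma cauchy_denom_lift m (x y : 'I_m.+1 -> R) (i j : 'I_m.+1) :
  cauchy_denom x y * (x j + y i) = cauchy_denom (x \o lift j) (y \o lift i) *
    (\prod_b (x j + y b)) * \prod_a (x a + y i).
Proof.
rewrite /cauchy_denom (bigD1_ord j) //=.
rewrite (eq_bigr (fun a => (x (lift j a) + y i) *
    \prod_(b < m) (x (lift j a) + y (lift i b)))); last first.
  by move=> a _; rewrite (bigD1_ord i).
by rewrite big_split /= [X in _ = _ * X](bigD1_ord j) //=; ring.
Qed.

Lemma cauchy_denom_neq0 n (x y : 'I_n -> R) :
  (forall i j, x i + y j != 0) -> cauchy_denom x y != 0.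
Proof. by move=> xy_neq0; apply/prodf_neq0 => i _; apply/prodf_neq0. Qed.

Lemma det_cauchy_mx n (x y : 'I_n -> R) : (forall i j, x i + y j != 0) ->
  \det (cauchy_mx x y) = vandermonde x * vandermonde y / cauchy_denom x y.
Proof.
elim: n x y => [|n IHn] x y xy_neq0.
  by rewrite det_mx00 /vandermonde /cauchy_denom !big_ord0 mulr1 divr1.
pose x' : 'I_n -> R := x \o lift ord0; pose y' : 'I_n -> R := y \o lift ord0.
pose u i := (x' i - x ord0) / (x' i + y ord0).
pose v j := (y' j - y ord0) / (x ord0 + y' j).
have schur : \det (cauchy_mx x y) =
    (x ord0 + y ord0)^-1 * \det (\matrix_(i, j) (u i * cauchy_mx x' y' i j * v j)).
  have lshift0 : lshift n (0 : 'I_1) = ord0 by apply: val_inj.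
  have rshift1 k : rshift 1 k = lift ord0 k by apply: val_inj.
  rewrite (det_ulsub_schur (A := cauchy_mx x y : 'M_(1 + n))) !mxE lshift0 ?unitfE ?invr_eq0 //.
  congr (_ * \det _); apply/matrixP => i j; rewrite !mxE big_ord1 !mxE invrK.
  rewrite lshift0 !rshift1 /u /v /x' /y' /=; field.
  by rewrite !xy_neq0.
have vandermonde_lift0 (z : 'I_n.+1 -> R) : vandermonde z =
    vandermonde (z \o lift ord0) * \prod_i (z (lift ord0 i) - z ord0).
  rewrite (vandermonde_lift z ord0) [X in _ * X * _]big_pred0 ?mulr1; last by move=> a.
  by rewrite [in X in _ * X]big_mkcond big_ord_recl /= mul1r.
have denomE := cauchy_denom_lift x y ord0 ord0.
rewrite !big_ord_recl -/x' -/y' in denomE.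
have x'y_neq0 i j : x' i + y' j != 0 by exact: xy_neq0.
rewrite schur det_scale_rows_cols IHn // /u /v !prodf_div.
rewrite (vandermonde_lift0 x) (vandermonde_lift0 y).
have {}denomE : cauchy_denom x y = cauchy_denom x' y' *
    ((x ord0 + y ord0) * \prod_i (x ord0 + y' i)) *
    ((x ord0 + y ord0) * \prod_i (x' i + y ord0)) / (x ord0 + y ord0).
  by rewrite -denomE mulfK.
rewrite denomE /x' /y' /=.
have [x0y_neq0 xy0_neq0] : \prod_i (x ord0 + y (lift ord0 i)) != 0 /\
    \prod_i (x (lift ord0 i) + y ord0) != 0.
  by split; apply/prodf_neq0 => i _; apply: xy_neq0.
by field; rewrite xy0_neq0 x0y_neq0 cauchy_denom_neq0 ?xy_neq0.
Qed.

Lemma vandermonde_neq0 n (x : 'I_n -> R) : injective x -> vandermonde x != 0.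
Proof.
move=> x_inj; apply/prodf_neq0 => i _; apply/prodf_neq0 => j lt_ij.
by rewrite subr_eq0 (inj_eq x_inj) -(inj_eq val_inj) gtn_eqF.
Qed.

Lemma det_cauchy_mx_neq0 n (x y : 'I_n -> R) : (forall i j, x i + y j != 0) ->
  injective x -> injective y -> \det (cauchy_mx x y) != 0.
Proof.
move=> xy_neq0 x_inj y_inj; rewrite det_cauchy_mx //.
by rewrite !mulf_neq0 ?invr_eq0 ?cauchy_denom_neq0 ?vandermonde_neq0.
Qed.

Definition prod_diff n (x : 'I_n -> R) (j : 'I_n) : R := \prod_(a < n | a != j) (x j - x a).

Lemma prod_diff_split m (x : 'I_m.+1 -> R) (j : 'I_m.+1) : prod_diff x j =
  (-1) ^+ (m - j) * (\prod_(a < m.+1 | (a < j)%N) (x j - x a) *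
                      \prod_(b < m.+1 | (j < b)%N) (x b - x j)).
Proof.
rewrite /prod_diff (bigID (fun a : 'I_m.+1 => (a < j)%N)) /= mulrCA.
congr (_ * _); first by apply: eq_bigl => a; rewrite -(inj_eq val_inj) /=; lia.
rewrite -subSS -(prod_ord_gt_const j) -big_split /=.
apply: eq_big => [a|a _]; first by rewrite -(inj_eq val_inj) /=; lia.
by rewrite mulN1r opprB.
Qed.

Lemma vandermonde_prod_diff m (x : 'I_m.+1 -> R) (j : 'I_m.+1) :
  vandermonde x = (-1) ^+ (m - j) * vandermonde (x \o lift j) * prod_diff x j.
Proof.
rewrite (vandermonde_lift x j) prod_diff_split -[RHS]mulrA [in RHS]mulrCA.
by rewrite signrMK mulrA.
Qed.

Lemma cofactor_cauchy_mx m (x y : 'I_m.+1 -> R) (i j : 'I_m.+1) :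
  (forall a b, x a + y b != 0) ->
  cofactor (cauchy_mx x y) j i * ((x j + y i) * prod_diff x j * prod_diff y i) =
  \det (cauchy_mx x y) * ((\prod_b (x j + y b)) * \prod_a (x a + y i)).
Proof.
move=> xy_neq0.
have minorE : row' j (col' i (cauchy_mx x y)) = cauchy_mx (x \o lift j) (y \o lift i).
  by apply/matrixP => a b; rewrite !mxE.
have denomE : cauchy_denom x y = cauchy_denom (x \o lift j) (y \o lift i) *
    (\prod_b (x j + y b)) * (\prod_a (x a + y i)) / (x j + y i).
  by rewrite -cauchy_denom_lift mulfK.
have [row_neq0 col_neq0] : \prod_b (x j + y b) != 0 /\ \prod_a (x a + y i) != 0.
  by split; apply/prodf_neq0 => a _.
have xy_lift_neq0 a b : (x \o lift j) a + (y \o lift i) b != 0 by apply: xy_neq0.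
rewrite /cofactor minorE (det_cauchy_mx xy_lift_neq0) (det_cauchy_mx xy_neq0) denomE.
rewrite (vandermonde_prod_diff x j) (vandermonde_prod_diff y i).
rewrite (@signr_addn_subn _ m j i (ltn_ord j) (ltn_ord i)).
by field; rewrite row_neq0 col_neq0 cauchy_denom_neq0 ?xy_neq0.
Qed.

Lemma prod_diff_neq0 n (x : 'I_n -> R) j : injective x -> prod_diff x j != 0.
Proof.
by move=> x_inj; apply/prodf_neq0 => a a_neq_j; rewrite subr_eq0 (inj_eq x_inj) eq_sym.
Qed.

Section Symmetric.
Variables (m : nat) (x : 'I_m.+1 -> R).
Hypotheses (xx_neq0 : forall a b, x a + x b != 0) (x_inj : injective x).

Lemma det_cauchy_mx_sym : \det (cauchy_mx x x) =
  (\prod_(a < m.+1) \prod_(b < m.+1 | (a < b)%N) (x a - x b) ^+ 2) /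
  \prod_(a < m.+1) \prod_(b < m.+1) (x a + x b).
Proof.
rewrite det_cauchy_mx // -expr2 -prodrXl; congr (_ / _).
by apply: eq_bigr => a _; rewrite -prodrXl; apply: eq_bigr => b _; rewrite -opprB sqrrN.
Qed.

Lemma cofactor_cauchy_mx_sym j i : cofactor (cauchy_mx x x) j i =
  \det (cauchy_mx x x) * ((\prod_b (x j + x b)) * \prod_a (x a + x i)) /
  ((x j + x i) * prod_diff x j * prod_diff x i).
Proof.
by rewrite -cofactor_cauchy_mx // mulfK // !mulf_neq0 ?prod_diff_neq0.
Qed.

Lemma cofactor_cauchy_mx_diag j : cofactor (cauchy_mx x x) j j =
  \det (cauchy_mx x x) * (2 * x j) * (\prod_(k < m.+1 | k != j) (x k + x j) ^+ 2) /
  \prod_(k < m.+1 | k != j) (x k - x j) ^+ 2.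
Proof.
have diffE : \prod_(k < m.+1 | k != j) (x k - x j) ^+ 2 = prod_diff x j ^+ 2.
  by rewrite /prod_diff -prodrXl; apply: eq_bigr => k _; rewrite -opprB sqrrN.
have sumE : \prod_(k < m.+1 | k != j) (x k + x j) ^+ 2 =
    \prod_(k < m.+1 | k != j) (x j + x k) * \prod_(k < m.+1 | k != j) (x k + x j).
  by rewrite prodrXl expr2; congr (_ * _); apply: eq_bigr => k _; rewrite addrC.
rewrite cofactor_cauchy_mx_sym diffE sumE !(bigD1 j (P := predT)) //=.
by field; rewrite xx_neq0 prod_diff_neq0.
Qed.

Lemma cofactor_cauchy_mx_offdiag i j : i != j -> cofactor (cauchy_mx x x) j i =
  - (\det (cauchy_mx x x) * (4 * x i * x j * (x i + x j) *
       \prod_(l < m.+1 | (l != i) && (l != j)) ((x i + x l) * (x j + x l))) /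
     ((x j - x i) ^+ 2 *
       \prod_(l < m.+1 | (l != i) && (l != j)) ((x i - x l) * (x j - x l)))).
Proof.
move=> neq_ij.
have prod_split2 (F : 'I_m.+1 -> R) :
    \prod_b F b = F i * F j * \prod_(b | (b != i) && (b != j)) F b.
  by rewrite (bigD1 i) // (bigD1 j) 1?eq_sym //= mulrA.
have prod_diff_j : prod_diff x j =
    (x j - x i) * \prod_(b < m.+1 | (b != i) && (b != j)) (x j - x b).
  by rewrite /prod_diff (bigD1 i) //=; congr (_ * _); apply: eq_bigl => b; rewrite andbC.
have prod_diff_i : prod_diff x i =
    (x i - x j) * \prod_(b < m.+1 | (b != i) && (b != j)) (x i - x b).
  by rewrite /prod_diff (bigD1 j) 1?eq_sym.
have sum_i : \prod_b (x b + x i) =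
    (x i + x i) * (x j + x i) * \prod_(b < m.+1 | (b != i) && (b != j)) (x i + x b).
  by rewrite prod_split2; congr (_ * _); apply: eq_bigr => b _; rewrite addrC.
have [Qi_neq0 Qj_neq0] :
    \prod_(b < m.+1 | (b != i) && (b != j)) (x i - x b) != 0 /\
    \prod_(b < m.+1 | (b != i) && (b != j)) (x j - x b) != 0.
  by split; apply/prodf_neq0 => b /andP[? ?]; rewrite subr_eq0 (inj_eq x_inj) eq_sym.
have xij_neq0 : x i - x j != 0 by rewrite subr_eq0 (inj_eq x_inj).
have xji_neq0 : x j - x i != 0 by rewrite subr_eq0 (inj_eq x_inj) eq_sym.
rewrite cofactor_cauchy_mx_sym prod_split2 sum_i prod_diff_i prod_diff_j !big_split /=.
by field; rewrite xx_neq0 Qi_neq0 Qj_neq0 xij_neq0 xji_neq0.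
Qed.

End Symmetric.

End CauchyDeterminant.

Section Covariance.
Variables (R : realType) (d n : nat) (V c : R) (tau : 'I_n -> R).

Definition Sigma_sp_col : 'cV[R]_n := \col_i (2 * d%:R * ball_vol d / a_ d tau i).
Definition Sigma_sp_row : 'rV[R]_n := \row_j (a_ d tau j)^-1.

Lemma Sigma_sb_cauchy :
  Sigma_sb d V tau = (V * d%:R * ball_vol d / 2) *: cauchy_mx (x_ d tau) (x_ d tau).
Proof. by apply/matrixP => i j; rewrite !mxE invfM mulrA. Qed.

Lemma Sigma_sp_rank1 :
  Sigma_sp d V tau = (V * d%:R * ball_vol d / 2) *: (Sigma_sp_col *m Sigma_sp_row).
Proof.
apply/matrixP => i j; rewrite !mxE big_ord1 !mxE invfM.
(* Abstracting the inverses spares [field] the side conditions [a_ i != 0]. *)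
by move: (a_ d tau i)^-1 (a_ d tau j)^-1 => u v; field.
Qed.

Lemma Sigma_cauchy_rank1 : c != 0 -> Sigma d V c tau =
  (if c <= 1 then V * d%:R * ball_vol d / 2 else V * d%:R * ball_vol d / (2 * c)) *:
  (cauchy_mx (x_ d tau) (x_ d tau) + (c *: Sigma_sp_col) *m Sigma_sp_row).
Proof.
move=> c_neq0; rewrite /Sigma Sigma_sb_cauchy Sigma_sp_rank1 -scalemxAl scalerDr.
case: ifP => _; rewrite !scalerA; congr (_ *: _ + _ *: _).
- exact: mulrC.
- by rewrite mulrC invfM mulrA.
- by rewrite invfM mulrA divfK.
Qed.

End Covariance.

Section Determinant.
Variables (R : realType) (d m : nat) (c : R) (tau : 'I_m.+1 -> R).
Hypotheses (x_gt0 : forall i, 0 < x_ d tau i) (x_inj : injective (x_ d tau)).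

Lemma a_gt0 i : 0 < a_ d tau i.
Proof.
have := x_gt0 i; have : 0 <= d%:R :> R by exact: ler0n.
by rewrite /x_ /a_; lra.
Qed.

Lemma det_cauchy_add_Sigma_sp :
  \det (cauchy_mx (x_ d tau) (x_ d tau) + (c *: Sigma_sp_col d tau) *m Sigma_sp_row d tau) =
  Dconst d c tau.
Proof.
set x := x_ d tau; set a := a_ d tau; set C := cauchy_mx x x.
have xx_neq0 i j : x i + x j != 0 by rewrite gt_eqF // addr_gt0.
have a_neq0 i : a i != 0 by rewrite gt_eqF // a_gt0.
have diff_neq0 k l : k != l -> x k - x l != 0 by rewrite subr_eq0 (inj_eq x_inj).
have detC_neq0 : \det C != 0 by exact: det_cauchy_mx_neq0.
rewrite det_add_rank1 // /Dconst -/x -/a -det_cauchy_mx_sym // mulrDl mul1r.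
congr (_ + _); rewrite /Sigma_sp_row /Sigma_sp_col !mxE mulr_suml; apply: eq_bigr => j _.
(* Column [j] of [\adj C] yields the [j]-th summand of [Dconst]: its diagonal
   entry the first term, the other entries the inner sum over [i != j]. *)
rewrite !mxE (bigD1 j) //= mulrDl mulr_suml [RHS]mulrC mulrA mulrBr mulr_sumr -sumrN.
rewrite mulrDr mulr_sumr -/a; congr (_ + _).
  rewrite !mxE cofactor_cauchy_mx_diag //.
  have diffs_neq0 : \prod_(k < m.+1 | k != j) (x k - x j) ^+ 2 != 0.
    by apply/prodf_neq0 => k neq_kj; rewrite expf_neq0 // diff_neq0.
  by field; rewrite diffs_neq0 a_neq0.
apply: eq_bigr => i neq_ij.
rewrite !mxE cofactor_cauchy_mx_offdiag //.
have diffs_neq0 :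
    \prod_(l < m.+1 | (l != i) && (l != j)) ((x i - x l) * (x j - x l)) != 0.
  by apply/prodf_neq0 => l /andP[neq_li neq_lj]; rewrite mulf_neq0 // diff_neq0 // eq_sym.
by field; rewrite diffs_neq0 diff_neq0 ?a_neq0 // eq_sym.
Qed.

End Determinant.

Theorem theorem7p3 (R : realType) (d n : nat) (V c : R) (tau : 'I_n -> R) :
  (1 <= d)%N -> (2 <= n)%N -> 0 <= V -> 0 < c ->
  (forall i : 'I_n, - (d%:R / 2) < tau i) ->
  (forall i j : 'I_n, (i < j)%N -> tau i < tau j) ->
  (c <= 1 -> \det (Sigma d V c tau) =
               Dconst d c tau * (V * d%:R * ball_vol d / 2) ^+ n) /\
  (1 < c -> \det (Sigma d V c tau) =
               Dconst d c tau * (V * d%:R * ball_vol d / (2 * c)) ^+ n).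
Proof.
move=> _ n_ge2 _ c_gt0 tau_gt tau_mono.
case: n tau n_ge2 tau_gt tau_mono => [//|m] tau _ tau_gt tau_mono.
have x_gt0 i : 0 < x_ d tau i by have := tau_gt i; rewrite /x_; lra.
have x_inj : injective (x_ d tau).
  move=> i j /addIr eq_tau; apply/val_inj.
  by case: (ltngtP i j) => // /tau_mono; rewrite eq_tau ltxx.
rewrite Sigma_cauchy_rank1 ?gt_eqF // detZ det_cauchy_add_Sigma_sp // mulrC.
by split=> [-> // | lt1c]; rewrite leNgt lt1c.
Qed.
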